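(* Let $A\in\mathbb{Z}^{d\times n}$, $\mathbf{b}\in\mathbb{Z}^d$, $\mathbf{c}\in\mathbb{Z}^n$, $\mathbf{u}\in\mathbb{Z}_{\ge0}^n$. Let $\mathbf{x}_k$ be feasible, let $\alpha\mathbf{s}$ be a steepest-descent augmentation relative to $\mathbf{x}_k$, and let $\mathbf{x}_{k+1}:=\mathbf{x}_k+\alpha\mathbf{s}$. Let $\beta\mathbf{t}$ be a steepest-descent augmentation relative to $\mathbf{x}_{k+1}$. Then $-\mathbf{c}^\top\mathbf{s}/\|\mathbf{s}\|_1\ \ge\ -\mathbf{c}^\top\mathbf{t}/\|\mathbf{t}\|_1$.
   Context: Feasible means $A\mathbf{x}=\mathbf{b}$, $\mathbf{0}\le\mathbf{x}\le\mathbf{u}$, $\mathbf{x}\in\mathbb{Z}^n$. A steepest-descent augmentation relative to a feasible $\mathbf{x}$ is $\alpha\mathbf{s}$ where $\mathbf{s}\in\mathbb{Z}^n\setminus\{\mathbf{0}\}$, $A\mathbf{s}=\mathbf{0}$, $\mathbf{c}^\top\mathbf{s}<0$, $\alpha$ is a positive integer with $\mathbf{x}+\alpha\mathbf{s}$ feasible, and $-\mathbf{c}^\top\mathbf{s}/\|\mathbf{s}\|_1\ge-\mathbf{c}^\top\mathbf{z}/\|\mathbf{z}\|_1$ for every $\mathbf{z}\in\mathbb{Z}^n\setminus\{\mathbf{0}\}$ with $A\mathbf{z}=\mathbf{0}$ and $\mathbf{x}+\mathbf{z}$ feasible. *)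

From HB Require Import structures.
From mathcomp Require Import all_boot all_order all_algebra.
Set Implicit Arguments. Unset Strict Implicit. Unset Printing Implicit Defensive.
Import Order.TTheory GRing.Theory Num.Theory.
Local Open Scope ring_scope.

Definition vec (n : nat) := 'I_n -> int.

Definition vadd n (x y : vec n) : vec n := fun i => x i + y i.
Definition vscale n (a : int) (x : vec n) : vec n := fun i => a * x i.

Definition mxv d n (A : 'M[int]_(d, n)) (x : vec n) : vec d :=
  fun j => \sum_(i < n) A j i * x i.

Definition dotv n (c x : vec n) : int := \sum_(i < n) c i * x i.

Definition norm1 n (x : vec n) : int := \sum_(i < n) `|x i|.

Definition feasible d n (A : 'M[int]_(d, n)) (b : vec d) (u : vec n) (x : vec n) : Prop :=
  (forall j, mxv A x j = b j) /\ (forall i, 0 <= x i /\ x i <= u i).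

Definition sd_ratio n (c s : vec n) : rat := (- dotv c s)%:~R / (norm1 s)%:~R.

Definition steepest_aug d n (A : 'M[int]_(d, n)) (b : vec d) (c u : vec n)
    (x : vec n) (alpha : int) (s : vec n) : Prop :=
  (exists i, s i != 0) /\
  (forall j, mxv A s j = 0) /\
  dotv c s < 0 /\
  0 < alpha /\
  feasible A b u (vadd x (vscale alpha s)) /\
  (forall z : vec n, (exists i, z i != 0) -> (forall j, mxv A z j = 0) ->
     feasible A b u (vadd x z) -> sd_ratio c s >= sd_ratio c z).

Arguments sd_ratio {n} c s.
Arguments steepest_aug {d n} A b c u x alpha s.
Arguments feasible {d n} A b u x.

From HB Require Import structures.
From mathcomp Require Import all_boot all_order all_algebra.
Import Order.TTheory GRing.Theory Num.Theory.
Local Open Scope ring_scope.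

(* If [t] were steeper than [s], then [alpha s + beta t] would be a
   feasible direction at [xk] (it leads to [x_{k+1} + beta t]), and, its cost being
   the weighted sum of the costs of [s] and [t] while its 1-norm is at most the
   weighted sum of their norms, it would be strictly steeper than [s], contradicting
   the choice of [s]. *)

Section VectorAlgebra.
Variable n : nat.
Implicit Types (c x y : vec n) (a : int).

Lemma dotvD c x y : dotv c (vadd x y) = dotv c x + dotv c y.
Proof. by rewrite /dotv -big_split; apply: eq_bigr => i _; rewrite mulrDr. Qed.

Lemma dotvZ c a x : dotv c (vscale a x) = a * dotv c x.
Proof. by rewrite /dotv mulr_sumr; apply: eq_bigr => i _; rewrite mulrCA. Qed.

Lemma mxvD d (A : 'M[int]_(d, n)) x y j : mxv A (vadd x y) j = mxv A x j + mxv A y j.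
Proof. by rewrite /mxv -big_split; apply: eq_bigr => i _; rewrite mulrDr. Qed.

Lemma mxvZ d (A : 'M[int]_(d, n)) a x j : mxv A (vscale a x) j = a * mxv A x j.
Proof. by rewrite /mxv mulr_sumr; apply: eq_bigr => i _; rewrite mulrCA. Qed.

Lemma norm1D_le x y : norm1 (vadd x y) <= norm1 x + norm1 y.
Proof. by rewrite /norm1 -big_split; apply: ler_sum => i _; apply: ler_normD. Qed.

Lemma norm1Z a x : norm1 (vscale a x) = `|a| * norm1 x.
Proof. by rewrite /norm1 mulr_sumr; apply: eq_bigr => i _; rewrite normrM. Qed.

Lemma norm1_ge0 x : 0 <= norm1 x.
Proof. by apply: sumr_ge0 => i _; apply: normr_ge0. Qed.

Lemma norm1_gt0 x : (exists i, x i != 0) -> 0 < norm1 x.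
Proof.
case=> i xi0; rewrite /norm1 (bigD1 i) //= ltr_pwDl ?normr_gt0 //.
by apply: sumr_ge0 => k _; apply: normr_ge0.
Qed.

Lemma nonzero_of_dotv_neq0 c x : dotv c x != 0 -> exists i, x i != 0.
Proof.
move=> cx0; apply/existsP; apply: contraNT cx0 => /existsPn x0.
by rewrite /dotv big1 // => i _; rewrite (eqP (negbNE (x0 i))) mulr0.
Qed.

End VectorAlgebra.

Lemma feasible_ext d n (A : 'M[int]_(d, n)) b u (x y : vec n) :
  x =1 y -> feasible A b u x -> feasible A b u y.
Proof.
move=> xy [Ax xb]; split=> [j | i]; last by rewrite -xy.
by rewrite -(Ax j); apply: eq_bigr => i _; rewrite xy.
Qed.

(* With [r] the steepness of [s]: [-c.t > r |t|], [-c.s = r |s|] and [r >= 0], so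
   [-c.z > r (a |s| + b |t|) >= r |z|]. *)
Lemma sd_ratio_comb_gt n (c s t : vec n) (a b : int) :
    0 < a -> 0 < b -> dotv c s <= 0 ->
    (exists i, s i != 0) -> (exists i, t i != 0) ->
    sd_ratio c s < sd_ratio c t ->
  sd_ratio c s < sd_ratio c (vadd (vscale a s) (vscale b t)).
Proof.
move=> a0 b0 cs0 s0 t0; set z := vadd _ _; rewrite /sd_ratio.
move r_def: (_ / _) => r.
have Ns0 : (0 : rat) < (norm1 s)%:~R by rewrite ltr0z norm1_gt0.
have Nt0 : (0 : rat) < (norm1 t)%:~R by rewrite ltr0z norm1_gt0.
have r0 : 0 <= r by rewrite -r_def divr_ge0 ?(ltW Ns0) // ler0z oppr_ge0.
have Ds : (- dotv c s)%:~R = r * (norm1 s)%:~R :> rat by rewrite -r_def divfK ?gt_eqF.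
rewrite ltr_pdivlMr // => Dt.
have Dz : (- dotv c z)%:~R = a%:~R * (- dotv c s)%:~R + b%:~R * (- dotv c t)%:~R :> rat.
  by rewrite dotvD !dotvZ -!intrM -intrD mulrN mulrN opprD.
have Nz : (norm1 z)%:~R <= a%:~R * (norm1 s)%:~R + b%:~R * (norm1 t)%:~R :> rat.
  by rewrite -!intrM -intrD ler_int -(gtr0_norm a0) -(gtr0_norm b0) -!norm1Z norm1D_le.
have key : r * (norm1 z)%:~R < (- dotv c z)%:~R.
  apply: (le_lt_trans (ler_wpM2l r0 Nz)).
  by rewrite Dz Ds mulrDr !(mulrCA r) ltrD2l ltr_pM2l ?ltr0z.
have Nz0 : (0 : rat) < (norm1 z)%:~R.
  rewrite ltr0z; apply/norm1_gt0/(nonzero_of_dotv_neq0 _ c).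
  have : (0 : rat) < (- dotv c z)%:~R.
    by apply: le_lt_trans key; rewrite mulr_ge0 // ler0z norm1_ge0.
  by rewrite ltr0z oppr_gt0 => /lt_eqF ->.
by rewrite ltr_pdivlMr.
Qed.

Theorem lemma4 (d n : nat) (A : 'M[int]_(d, n)) (b : vec d) (c u : vec n)
    (hu : forall i, 0 <= u i)
    (xk : vec n) (alpha beta : int) (s t : vec n) :
  feasible A b u xk ->
  steepest_aug A b c u xk alpha s ->
  steepest_aug A b c u (vadd xk (vscale alpha s)) beta t ->
  sd_ratio c s >= sd_ratio c t.
Proof.
move=> _ [s0 [As [cs [a0 [_ s_steepest]]]]] [t0 [At [ct [b0 [ft _]]]]].
rewrite leNgt; apply/negP => st_lt.
set z := vadd (vscale alpha s) (vscale beta t).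
have zs_lt : sd_ratio c s < sd_ratio c z by apply: sd_ratio_comb_gt; rewrite ?ltW.
have z0 : exists i, z i != 0.
  apply: (nonzero_of_dotv_neq0 _ c); rewrite lt_eqF // dotvD !dotvZ.
  by rewrite -oppr_gt0 opprD addr_gt0 // -mulrN pmulr_rgt0 // oppr_gt0.
have Az j : mxv A z j = 0 by rewrite mxvD !mxvZ As At !mulr0 addr0.
have fz : feasible A b u (vadd xk z).
  by apply: feasible_ext ft => i; rewrite /vadd /vscale addrA.
by move: (s_steepest z z0 Az fz); rewrite leNgt zs_lt.
Qed.
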